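(* Let $n\ge 1$ and $\mathcal{P}=\{x\in\mathbb{R}^n : \tfrac12(\max_i x_i-\min_i x_i)\le 1\}$. The number of faces of $\mathcal{P}$ (including $\mathcal{P}$ itself) is $3^n-2^{n+1}+2$.
   Context: A face of a polyhedron $\mathcal{Q}\subseteq\mathbb{R}^n$ is a non-empty subset $F$ with either $F=\mathcal{Q}$ or $F=\mathcal{Q}\cap\{x: b^\top x=c\}$ for some $b\in\mathbb{R}^n$, $c\in\mathbb{R}$ with $b^\top x\le c$ for all $x\in\mathcal{Q}$. *)

From mathcomp Require Import all_boot all_order all_algebra.
Set Implicit Arguments. Unset Strict Implicit. Unset Printing Implicit Defensive.
Import Order.TTheory GRing.Theory Num.Theory.
Local Open Scope ring_scope.

(* max_i x_i and min_i x_i (the initial value is x_0, irrelevant by idempotence when n >= 1). *)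
Definition vmax (R : realFieldType) (n : nat) (x : 'rV[R]_n) : R :=
  let s := [seq x 0 i | i <- enum 'I_n] in \big[Num.max/head 0 s]_(v <- s) v.
Definition vmin (R : realFieldType) (n : nat) (x : 'rV[R]_n) : R :=
  let s := [seq x 0 i | i <- enum 'I_n] in \big[Num.min/head 0 s]_(v <- s) v.

Definition Pset (R : realFieldType) (n : nat) : 'rV[R]_n -> Prop :=
  fun x => (vmax x - vmin x) / 2 <= 1.

Definition dotv (R : realFieldType) (n : nat) (b x : 'rV[R]_n) : R :=
  \sum_(i < n) b 0 i * x 0 i.

Definition is_face (R : realFieldType) (n : nat) (Q F : 'rV[R]_n -> Prop) : Prop :=
  (exists x, F x) /\
  ((forall x, F x <-> Q x) \/
   exists (b : 'rV[R]_n) (c : R),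
     (forall x, Q x -> dotv b x <= c) /\
     (forall x, F x <-> (Q x /\ dotv b x = c))).

From mathcomp Require Import all_boot all_order all_algebra.
From mathcomp Require Import ring lra zify.
From Stdlib Require Import FunctionalExtensionality PropExtensionality.
Set Implicit Arguments. Unset Strict Implicit. Unset Printing Implicit Defensive.
Import Order.TTheory GRing.Theory Num.Theory.
Local Open Scope ring_scope.

(* For n >= 1, P is the polytope { x : x_i - x_j <= 2 for all i, j }.  A valid
   inequality b.x <= c for P must have sum_k b_k = 0, since P contains every
   constant vector.  If b <> 0, let I = {b > 0} and J = {b < 0}; then
   b.x = sum_(i in I, j in J) w_ij (x_i - x_j) with all w_ij > 0, so the maximum
   of b.x on P is attained exactly on
     F(I, J) = { x in P : x_i - x_j = 2 for all i in I, j in J },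
   and conversely every such F(I, J) with I, J disjoint and nonempty is a face.
   The face F(I, J) determines I and J (test it on the points 2.1_A for A = I and
   A = ~J), so the faces other than P correspond to maps 'I_n -> 'I_3 whose
   fibres over two fixed values are both nonempty: 3^n - 2.2^n + 1 of them by
   inclusion-exclusion. *)

Lemma bigmax_sub_bigmin_le (R : realDomainType) (s : seq R) (d : R) :
  s != [::] ->
  \big[Num.max/head 0 s]_(v <- s) v - \big[Num.min/head 0 s]_(v <- s) v <= d <->
  {in s &, forall u v, u - v <= d}.
Proof.
case: s => // a s _; set s' := a :: s; split=> [le_d u v u_s v_s | le_d].
  apply: le_trans le_d; apply: lerB.
    exact: (le_bigmax_seq _ _ xpredT (fun v => v) u_s).
  exact: (ge_bigmin_seq _ _ xpredT (fun v => v) v_s).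
have a_s : a \in s' by rewrite mem_head.
have le_d' u v : u \in s' -> v \in s' -> u - d <= v by rewrite lerBlDl -lerBlDr; apply: le_d.
have max_le v : v \in s' -> \big[Num.max/a]_(u <- s' | u \in s') u - d <= v.
  by move=> v_s; rewrite lerBlDr; apply: bigmax_le => [|u u_s]; rewrite -lerBlDr ?le_d'.
rewrite !big_seq lerBlDr -lerBlDl; apply: le_bigmin => [|v v_s]; exact: max_le.
Qed.

Lemma extend_enum (T : finType) (X : Type) (S : {set T}) (f : T -> X) (x0 : X) :
  {in S &, injective f} -> {in S, forall t, f t <> x0} ->
  exists e : 'I_#|S|.+1 -> X, injective e /\
    forall y, (exists i, y = e i) <-> y = x0 \/ exists2 t, t \in S & y = f t.
Proof.
move=> f_inj f_neq.
pose e (i : 'I_#|S|.+1) := if unlift ord0 i is Some k then f (enum_val k) else x0.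
exists e; split=> [i1 i2 | y].
  rewrite /e; case: unliftP => [k1 ->|->]; case: unliftP => [k2 ->|->] //.
  - by move/(f_inj _ _ (enum_valP k1) (enum_valP k2))/enum_val_inj ->.
  - by move/(f_neq _ (enum_valP k1)).
  - by move/esym/(f_neq _ (enum_valP k2)).
split=> [[i ->] | [-> | [t tS ->]]].
- rewrite /e; case: unliftP => [k _|_]; last by left.
  by right; exists (enum_val k) => //; exact: enum_valP.
- by exists ord0; rewrite /e unlift_none.
- by exists (lift ord0 (enum_rank_in tS t)); rewrite /e liftK enum_rankK_in.
Qed.

Section TernaryCodes.
Variable T : finType.
Implicit Types (g : {ffun T -> 'I_3}) (I J : {set T}).

Definition code_fiber g (a : 'I_3) : {set T} := [set k | g k == a].

Definition proper_codes : {set {ffun T -> 'I_3}} :=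
  [set g | (code_fiber g ord0 != set0) && (code_fiber g ord_max != set0)].

Definition code_of I J : {ffun T -> 'I_3} :=
  [ffun k => if k \in I then ord0 else if k \in J then ord_max else inord 1].

Lemma code_fiber_disjoint g : [disjoint code_fiber g ord0 & code_fiber g ord_max].
Proof. by rewrite disjoints_subset; apply/subsetP => k; rewrite !inE => /eqP ->. Qed.

Lemma code_of_fibers I J : [disjoint I & J] ->
  code_fiber (code_of I J) ord0 = I /\ code_fiber (code_of I J) ord_max = J.
Proof.
move=> dIJ; split; apply/setP => k; rewrite !inE ffunE.
  by case: (k \in I); case: (k \in J); rewrite // -val_eqE /= inordK.
case: (boolP (k \in J)) => [kJ | _]; first by rewrite (disjointFl dIJ kJ).
by case: (k \in I); rewrite // -val_eqE /= inordK.
Qed.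

Lemma code_fibers_inj g1 g2 :
  code_fiber g1 ord0 = code_fiber g2 ord0 -> code_fiber g1 ord_max = code_fiber g2 ord_max ->
  g1 = g2.
Proof.
move=> /setP eq0 /setP eq2; apply/ffunP => k; apply: val_inj.
move: (eq0 k) (eq2 k) (ltn_ord (g1 k)) (ltn_ord (g2 k)); rewrite !inE -!val_eqE /=.
by case: (val (g1 k)) => [|[|[|?]]]; case: (val (g2 k)) => [|[|[|?]]].
Qed.

Lemma card_codes_avoiding (B : {set 'I_3}) :
  #|[set g : {ffun T -> 'I_3} | [forall k, g k \notin B]]| = (#|~: B| ^ #|T|)%N.
Proof.
rewrite -card_ffun_on; apply: eq_card => g; rewrite inE.
by apply/forallP/ffun_onP => g_avoid k; move: (g_avoid k); rewrite !inE.
Qed.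

Lemma card_proper_codes : (#|proper_codes|.+1 = 3 ^ #|T| + 2 - 2 ^ #|T|.+1)%N.
Proof.
pose avoid (B : {set 'I_3}) := [set g : {ffun T -> 'I_3} | [forall k, g k \notin B]].
have fiberE g a : (code_fiber g a != set0) = ~~ [forall k, g k \notin [set a]].
  by rewrite negb_forall; apply/set0Pn/existsP => -[k kA]; exists k; move: kA; rewrite !inE negbK.
have -> : proper_codes = ~: (avoid [set ord0] :|: avoid [set ord_max]).
  by apply/setP => g; rewrite !inE !fiberE negb_or.
have avoid_both : avoid [set ord0] :&: avoid [set ord_max] = avoid [set ord0; ord_max].
  apply/setP => g; rewrite !inE.
  apply/andP/forallP => [[/forallP avoid0 /forallP avoid2] k | avoid02].
    by rewrite !inE negb_or; move: (avoid0 k) (avoid2 k); rewrite !inE => -> ->.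
  by split; apply/forallP => k; move: (avoid02 k); rewrite !inE negb_or => /andP[].
have card_avoid1 a : #|avoid [set a]| = (2 ^ #|T|)%N.
  by rewrite card_codes_avoiding cardsC1 card_ord.
have card_avoid2 : #|avoid [set ord0; ord_max]| = 1%N.
  by rewrite card_codes_avoiding cardsCs setCK cards2 card_ord exp1n.
have := cardsU (avoid [set ord0]) (avoid [set ord_max]).
have := cardsC (avoid [set ord0] :|: avoid [set ord_max]).
rewrite avoid_both !card_avoid1 card_avoid2 card_ffun !card_ord expnS.
have : (0 < 2 ^ #|T|)%N by rewrite expn_gt0.
set u := #|_ :|: _|; set v := #|~: _|.
lia.
Qed.

End TernaryCodes.

Section Faces.
Variables (R : realFieldType) (n : nat).
Hypothesis n_gt0 : (0 < n)%N.
Local Notation V := 'rV[R]_n.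
Local Notation P := (@Pset R n).
Implicit Types (x b : V) (I J A : {set 'I_n}) (w : 'I_n -> 'I_n -> R).

Lemma Pset_iff x : P x <-> forall i j, x 0 i - x 0 j <= 2.
Proof.
rewrite /Pset /vmax /vmin ler_pdivrMr ?ltr0n // mul1r.
rewrite bigmax_sub_bigmin_le; last by rewrite -size_eq0 size_map size_enum_ord -lt0n.
split=> [le2 i j | le2 _ _ /mapP[i _ ->] /mapP[j _ ->]]; last exact: le2.
by apply: le2; apply: map_f; rewrite mem_enum.
Qed.

Lemma Pset_const t : P (const_mx t).
Proof. by apply/Pset_iff => i j; rewrite !mxE subrr ler0n. Qed.

Definition top_on A : V := \row_k (if k \in A then 2 else 0).

Lemma Pset_top_on A : P (top_on A).
Proof. by apply/Pset_iff => i j; rewrite !mxE; case: (i \in A); case: (j \in A); lra. Qed.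

Definition pair_face I J : V -> Prop :=
  fun x => P x /\ forall i j, i \in I -> j \in J -> x 0 i - x 0 j = 2.

Lemma pair_face_top_on I J A : I \subset A -> [disjoint A & J] -> pair_face I J (top_on A).
Proof.
move=> IA dAJ; split=> [|i j iI jJ]; first exact: Pset_top_on.
by rewrite !mxE (subsetP IA i iI) (disjointFl dAJ jJ) subr0.
Qed.

Definition pair_sum I J w x := \sum_(i in I) \sum_(j in J) w i j * (x 0 i - x 0 j).

Lemma pair_sum_le I J w x : P x -> (forall i j, i \in I -> j \in J -> 0 <= w i j) ->
  pair_sum I J w x <= \sum_(i in I) \sum_(j in J) w i j * 2.
Proof.
move=> /Pset_iff le2 w_ge0; apply: ler_sum => i iI; apply: ler_sum => j jJ.
by rewrite ler_wpM2l ?w_ge0 ?le2.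
Qed.

Lemma pair_sum_eqP I J w x : P x -> (forall i j, i \in I -> j \in J -> 0 < w i j) ->
  pair_sum I J w x = \sum_(i in I) \sum_(j in J) w i j * 2 <->
  forall i j, i \in I -> j \in J -> x 0 i - x 0 j = 2.
Proof.
move=> /Pset_iff le2 w_gt0; rewrite /pair_sum !pair_big_dep /=.
split=> [eq2 i j iI jJ | eq2]; last first.
  by apply: eq_bigr => -[i j] /andP[iI jJ]; rewrite eq2.
have slack_ge0 (p : 'I_n * 'I_n) : (p.1 \in I) && (p.2 \in J) ->
    0 <= w p.1 p.2 * 2 - w p.1 p.2 * (x 0 p.1 - x 0 p.2).
  by case/andP=> ? ?; rewrite -mulrBr mulr_ge0 ?subr_ge0 // ltW ?w_gt0.
have slack_sum0 : \sum_(p | (p.1 \in I) && (p.2 \in J))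
    (w p.1 p.2 * 2 - w p.1 p.2 * (x 0 p.1 - x 0 p.2)) = 0.
  by rewrite sumrB eq2 subrr.
have /eqP := psumr_eq0P slack_ge0 slack_sum0 (i := (i, j)) (introT andP (conj iI jJ)).
rewrite /= -mulrBr mulf_eq0 gt_eqF ?w_gt0 //= subr_eq0 => /eqP; lra.
Qed.

Lemma pair_sum_top_on I J w : [disjoint I & J] ->
  pair_sum I J w (top_on I) = \sum_(i in I) \sum_(j in J) w i j * 2.
Proof.
move=> dIJ; have [_ top2] := pair_face_top_on (subxx I) dIJ.
by apply: eq_bigr => i iI; apply: eq_bigr => j jJ; rewrite top2.
Qed.

Definition pair_normal I J : V := \row_k (#|J|%:R * (k \in I)%:R - #|I|%:R * (k \in J)%:R).

Lemma dotv_pair_normal I J x : dotv (pair_normal I J) x = pair_sum I J (fun _ _ => 1) x.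
Proof.
have sum_in (A : {set 'I_n}) : \sum_k (k \in A)%:R * x 0 k = \sum_(k in A) x 0 k.
  by rewrite [RHS]big_mkcond; apply: eq_bigr => k _; case: (k \in A); rewrite ?mul1r ?mul0r.
have inner i : \sum_(j in J) 1 * (x 0 i - x 0 j) = x 0 i *+ #|J| - \sum_(j in J) x 0 j.
  by rewrite -sumr_const -sumrB; apply: eq_bigr => j _; rewrite mul1r.
rewrite /pair_sum (eq_bigr _ (fun i _ => inner i)) sumrB sumrMnl sumr_const.
rewrite /dotv; under eq_bigr do rewrite mxE mulrBl -!mulrA.
by rewrite sumrB -!mulr_sumr !sum_in !mulr_natl.
Qed.

Lemma pair_face_is_face I J : [disjoint I & J] -> is_face P (pair_face I J).
Proof.
move=> dIJ; split; first by exists (top_on I); exact: pair_face_top_on.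
right; exists (pair_normal I J), (\sum_(i in I) \sum_(j in J) 1 * 2).
have one_gt0 i j : i \in I -> j \in J -> 0 < 1 :> R by rewrite ltr01.
split=> [x Px | x]; rewrite dotv_pair_normal; first by rewrite pair_sum_le // => *; exact: ler01.
by split=> -[Px Hx]; split=> //; apply/(@pair_sum_eqP I J (fun _ _ => 1) x Px one_gt0).
Qed.

Lemma valid_normal_sum0 b c : (forall x, P x -> dotv b x <= c) -> \sum_k b 0 k = 0.
Proof.
move=> b_le; have [//|sb_neq0] := eqVneq (\sum_k b 0 k) 0; exfalso.
have := b_le _ (Pset_const ((`|c| + 1) / \sum_k b 0 k)).
rewrite /dotv (eq_bigr (fun k => b 0 k * ((`|c| + 1) / \sum_k b 0 k))) => [|k _];
  last by rewrite mxE.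
rewrite -mulr_suml mulrCA mulfV // mulr1; have := ler_norm c; lra.
Qed.

Definition pos_supp b := [set k | 0 < b 0 k].
Definition neg_supp b := [set k | b 0 k < 0].

Lemma sum_sign_split b (y : 'I_n -> R) :
  \sum_k b 0 k * y k = \sum_(i in pos_supp b) b 0 i * y i + \sum_(j in neg_supp b) b 0 j * y j.
Proof.
rewrite [in RHS]big_mkcond [X in _ + X]big_mkcond -big_split /=.
apply: eq_bigr => k _; rewrite !inE.
by case: (ltrgtP (b 0 k) 0) => [||->]; rewrite ?addr0 ?add0r ?mul0r.
Qed.

Lemma pos_mass_gt0 b : pos_supp b != set0 -> 0 < \sum_(i in pos_supp b) b 0 i.
Proof.
case/set0Pn => k kI; rewrite (bigD1 k) //=.
have : 0 <= \sum_(i in pos_supp b | i != k) b 0 i.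
  by apply: sumr_ge0 => i /andP[]; rewrite inE => /ltW.
move: kI; rewrite inE; lra.
Qed.

Lemma neg_mass_lt0 b : neg_supp b != set0 -> \sum_(j in neg_supp b) b 0 j < 0.
Proof.
case/set0Pn => k kJ; rewrite (bigD1 k) //=.
have : \sum_(j in neg_supp b | j != k) b 0 j <= 0.
  by apply: sumr_le0 => j /andP[]; rewrite inE => /ltW.
move: kJ; rewrite inE; lra.
Qed.

Lemma sign_supp_neq0 b : \sum_k b 0 k = 0 -> b != 0 ->
  pos_supp b != set0 /\ neg_supp b != set0.
Proof.
move=> sum0 b_neq0; have := sum_sign_split b (fun _ => 1).
rewrite !(eq_bigr _ (fun k _ => mulr1 (b 0 k))) sum0 => mass0.
have pos_neg : (pos_supp b != set0) = (neg_supp b != set0).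
  apply/idP/idP => [/pos_mass_gt0 | /neg_mass_lt0] mass_sgn; apply/negP => /eqP supp0;
    by move: mass0 mass_sgn; rewrite supp0 big_set0; lra.
have [k bk_neq0] : exists k, b 0 k != 0.
  apply/existsP; apply: contraNT b_neq0; rewrite negb_exists => /forallP b0.
  by apply/eqP/rowP => k; rewrite mxE; apply/eqP/negPn/b0.
suff I0 : pos_supp b != set0 by split; rewrite -?pos_neg.
have [bk_lt0 | bk_gt0 | bk0] := ltrgtP (b 0 k) 0; last by rewrite bk0 eqxx in bk_neq0.
  by rewrite pos_neg; apply/set0Pn; exists k; rewrite inE.
by apply/set0Pn; exists k; rewrite inE.
Qed.

Lemma dotv_sign_decomp b x : \sum_k b 0 k = 0 -> pos_supp b != set0 ->
  dotv b x = pair_sum (pos_supp b) (neg_supp b)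
                      (fun i j => b 0 i * - b 0 j / \sum_(i in pos_supp b) b 0 i) x.
Proof.
(* The weights have row sums b_i on I and column sums -b_j on J, because both
   parts of b have total mass s. *)
move=> sum0 /pos_mass_gt0; set s := \sum_(i in pos_supp b) b 0 i => s_gt0.
have s_neq0 : s != 0 by rewrite gt_eqF.
have neg_mass : \sum_(j in neg_supp b) b 0 j = - s.
  have := sum_sign_split b (fun _ => 1).
  rewrite !(eq_bigr _ (fun k _ => mulr1 (b 0 k))) sum0 -/s; lra.
rewrite /pair_sum.
under eq_bigr => i _ do (under eq_bigr => j _ do rewrite mulrBr).
under eq_bigr => i _ do rewrite sumrB.
rewrite sumrB.
have -> : \sum_(i in pos_supp b) \sum_(j in neg_supp b) b 0 i * - b 0 j / s * x 0 i =
          \sum_(i in pos_supp b) b 0 i * x 0 i.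
  apply: eq_bigr => i _.
  rewrite (eq_bigr (fun j => (b 0 i * x 0 i / s) * - b 0 j)); last by move=> j _; ring.
  by rewrite -mulr_sumr sumrN neg_mass opprK; field.
have -> : \sum_(i in pos_supp b) \sum_(j in neg_supp b) b 0 i * - b 0 j / s * x 0 j =
          - \sum_(j in neg_supp b) b 0 j * x 0 j.
  rewrite exchange_big /= -sumrN; apply: eq_bigr => j _.
  rewrite (eq_bigr (fun i => (- b 0 j * x 0 j / s) * b 0 i)); last by move=> i _; ring.
  by rewrite -mulr_sumr -/s; field.
by rewrite opprK /dotv (sum_sign_split b (x 0)).
Qed.

Lemma face_cases F : is_face P F ->
  (forall x, F x <-> P x) \/
  exists I J, [/\ I != set0, J != set0, [disjoint I & J] & forall x, F x <-> pair_face I J x].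
Proof.
case=> -[x0 Fx0] [F_P | [b [c [b_le F_eq]]]]; first by left.
have sum0 := valid_normal_sum0 b_le.
have [b0 | b_neq0] := eqVneq b 0.
  have dot0 x : dotv b x = 0 by rewrite b0 /dotv big1 // => k _; rewrite mxE mul0r.
  have [_] := (F_eq x0).1 Fx0; rewrite dot0 => c0.
  by left=> x; rewrite F_eq dot0 -c0; split=> [[]|].
have [I0 J0] := sign_supp_neq0 sum0 b_neq0.
move: I0 J0; set I := pos_supp b; set J := neg_supp b => I0 J0.
pose w i j := b 0 i * - b 0 j / \sum_(i in I) b 0 i.
have bE x : dotv b x = pair_sum I J w x := dotv_sign_decomp x sum0 I0.
have w_gt0 i j : i \in I -> j \in J -> 0 < w i j.
  by rewrite !inE => bi bj; rewrite /w divr_gt0 ?mulr_gt0 ?oppr_gt0 ?pos_mass_gt0.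
have dIJ : [disjoint I & J].
  by rewrite disjoints_subset; apply/subsetP => k; rewrite !inE -leNgt => /ltW.
have c_max : c = \sum_(i in I) \sum_(j in J) w i j * 2.
  apply/eqP; rewrite eq_le; apply/andP; split.
    have [Px0 <-] := (F_eq x0).1 Fx0; rewrite bE.
    by apply: pair_sum_le => // i j iI jJ; exact/ltW/w_gt0.
  by rewrite -(pair_sum_top_on w dIJ) -bE; apply/b_le/Pset_top_on.
right; exists I, J; split=> // x; rewrite F_eq bE c_max.
by split=> -[Px Hx]; split=> //; apply/(@pair_sum_eqP I J w x Px w_gt0).
Qed.

Lemma pair_face_subset I J I' J' : [disjoint I & J] -> I' != set0 -> J' != set0 ->
  (forall x, pair_face I J x -> pair_face I' J' x) -> I' \subset I /\ J' \subset J.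
Proof.
move=> dIJ /set0Pn[i' i'I'] /set0Pn[j' j'J'] sub; split; apply/subsetP => k kK.
  have [_ top2] := sub _ (pair_face_top_on (subxx I) dIJ).
  have := top2 _ _ kK j'J'; rewrite !mxE.
  by case: (k \in I) => //; case: (j' \in I) => /=; lra.
have IJc : I \subset ~: J by rewrite -disjoints_subset.
have JcJ : [disjoint ~: J & J] by rewrite disjoints_subset.
have [_ top2] := sub _ (pair_face_top_on IJc JcJ).
have := top2 _ _ i'I' kK; rewrite !mxE !inE.
by case: (k \in J) => //; case: (i' \in J) => /=; lra.
Qed.

Lemma pair_face_inj I J I' J' :
  I != set0 -> J != set0 -> [disjoint I & J] ->
  I' != set0 -> J' != set0 -> [disjoint I' & J'] ->
  pair_face I J = pair_face I' J' -> I = I' /\ J = J'.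
Proof.
move=> I0 J0 dIJ I'0 J'0 dIJ' eqF.
have [I'I J'J] : I' \subset I /\ J' \subset J.
  by apply: pair_face_subset => // x; rewrite eqF.
have [II' JJ'] : I \subset I' /\ J \subset J'.
  by apply: pair_face_subset => // x; rewrite eqF.
by split; apply/eqP; rewrite eqEsubset ?II' ?JJ'.
Qed.

Definition code_face (g : {ffun 'I_n -> 'I_3}) : V -> Prop :=
  pair_face (code_fiber g ord0) (code_fiber g ord_max).

Lemma code_face_is_face g : is_face P (code_face g).
Proof. exact/pair_face_is_face/code_fiber_disjoint. Qed.

Lemma code_face_inj : {in proper_codes 'I_n &, injective code_face}.
Proof.
move=> g1 g2; rewrite !inE => /andP[I1 J1] /andP[I2 J2] eqF.
have [eq0 eq2] := pair_face_inj I1 J1 (code_fiber_disjoint g1) I2 J2 (code_fiber_disjoint g2) eqF.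
exact: code_fibers_inj.
Qed.

Lemma code_face_neq_Pset g : g \in proper_codes 'I_n -> code_face g <> P.
Proof.
rewrite inE => /andP[/set0Pn[i iI] /set0Pn[j jJ]] eqF.
have [_] : code_face g (const_mx 0) by rewrite eqF; exact: Pset_const.
by move/(_ i j iI jJ); rewrite !mxE subrr => /eqP; rewrite eq_sym pnatr_eq0.
Qed.

Lemma Pset_is_face : is_face P P.
Proof. by split; [exists (const_mx 0); exact: Pset_const | left]. Qed.

End Faces.

Theorem corollary1 (R : realFieldType) (n : nat) (hn : (1 <= n)%N) :
  exists f : 'I_(3 ^ n + 2 - 2 ^ n.+1) -> ('rV[R]_n -> Prop),
    injective f /\
    (forall F : 'rV[R]_n -> Prop, is_face (@Pset R n) F <-> exists i, F = f i).
Proof.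
have := card_proper_codes 'I_n; rewrite card_ord => <-.
have [e [e_inj e_img]] := extend_enum (code_face_inj hn) (@code_face_neq_Pset R n hn).
exists e; split=> // F; rewrite e_img; split=> [/(face_cases hn) | [-> | [g _ ->]]].
- case=> [F_P | [I [J [I0 J0 dIJ F_IJ]]]].
    by left; apply: functional_extensionality => x; apply: propositional_extensionality.
  have [fib0 fib2] := code_of_fibers dIJ.
  right; exists (code_of I J); first by rewrite inE fib0 fib2 I0 J0.
  apply: functional_extensionality => x; apply: propositional_extensionality.
  by rewrite /code_face fib0 fib2.
- exact: Pset_is_face.
- exact: code_face_is_face.
Qed.
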